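(* For each integer $n\ge4$ there exists $\phi\in\mathbb{R}$ such that $$\left|\frac{\sin n\phi}{n\sin\phi}\right|-\left|\frac{\sin (n+1)\phi}{(n+1)\sin\phi}\right|>\frac1n;$$ more precisely, with $\theta_n=\pi/(n+1)$ and $\Psi_n(\phi)$ denoting the left-hand side, $\Psi_n(\theta_n)=1/n$ and $\Psi_n(\theta_n-\delta)>1/n$ for all sufficiently small $\delta>0$.
   Context: The quantity $\Psi_n(\phi)$ equals $|a_n(L_\phi)|-|a_{n+1}(L_\phi)|$ where $L_\phi(z)=\sum_{n\ge1}\frac{\sin n\phi}{n\sin\phi}z^n$. *)

From Stdlib Require Import Reals Lra Lia.
Open Scope R_scope.

(* The coefficient (sin (n phi)) / (n sin phi) of z^n in L_phi. *)
Definition coefL (n : nat) (phi : R) : R :=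
  sin (INR n * phi) / (INR n * sin phi).

Definition Psi (n : nat) (phi : R) : R :=
  Rabs (coefL n phi) - Rabs (coefL (S n) phi).

Definition theta (n : nat) : R := PI / INR (S n).

(** At [phi = theta], [sin ((n+1) phi) = 0] and
    [sin (n phi) = sin phi], so [Psi n theta = 1 / n].  For [phi = a - u] with
    [u = (n+1) delta / 2] and [a = theta + (n-1) delta / 2] one has
    [n phi = PI - (a + u)] and [(n+1) phi = PI - 2 u], and then
    [Psi n phi - 1/n = 2 sin u ((n+1) cos a - n cos u) / (n (n+1) sin phi)].
    This is positive as soon as [(n+1) cos a > n], which follows from
    [cos a >= 1 - a^2/2] once [(n+1) a^2 < 2]; as [delta -> 0] the latter tends
    to [PI^2 / (n+1) < 2], which holds because [n >= 4] and [PI^2 < 10]. *)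

From Stdlib Require Import Reals Lra Lia.
Open Scope R_scope.

Lemma PI_lt_3156 : PI < 3.156.
Proof.
  pose proof PI_RGT_0; pose proof PI_4.
  pose proof (sin_bound (PI / 6) 0 ltac:(lra) ltac:(lra)) as [taylor _].
  unfold sin_approx, sin_term in taylor; simpl in taylor.
  rewrite sin_PI6 in taylor.
  set (t := PI / 6) in *.
  assert (t <= 2/3) by (unfold t; lra).
  destruct (Rlt_or_le t 0.526) as [Ht | Ht]; [unfold t in Ht; lra | exfalso].
  (* [t - t^3/6] is increasing on [[0.526, 2/3]] and exceeds [1/2] at [0.526]. *)
  assert (0 <= (t - 0.526) * (6 - t * t - 0.526 * t - 0.526 * 0.526))
    by (apply Rmult_le_pos; nra).
  field_simplify in taylor; nra.
Qed.

Lemma cos_ge_1_sub_sqr_div2 (x : R) :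
  - PI / 2 <= x <= PI / 2 -> 1 - x * x / 2 <= cos x.
Proof.
  intros [hlo hhi]; destruct (cos_bound x 0 hlo hhi) as [taylor _].
  unfold cos_approx, cos_term in taylor; simpl in taylor; lra.
Qed.

Lemma sin_shift_identity (N a u : R) :
  N <> 0 -> N + 1 <> 0 -> sin (a - u) <> 0 ->
  sin (a + u) / (N * sin (a - u)) - sin (2 * u) / ((N + 1) * sin (a - u)) - 1 / N
  = 2 * sin u * ((N + 1) * cos a - N * cos u) / (N * (N + 1) * sin (a - u)).
Proof.
  intros HN HN1 Hs; rewrite sin_plus, sin_2a; rewrite sin_minus in *; field; auto.
Qed.

Lemma Psi_gt_inv_of_cos (n : nat) (a u : R) :
  (0 < n)%nat -> INR (S n) * a = PI + (INR n - 1) * u ->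
  0 < u < a -> a + u < PI -> INR n < INR (S n) * cos a ->
  Psi n (a - u) > 1 / INR n.
Proof.
  intros hn Ha [u0 ua] au Hcos.
  assert (N0 : 0 < INR n) by (apply lt_0_INR; lia).
  rewrite S_INR in *; set (N := INR n) in *.
  assert (E1 : INR n * (a - u) = PI - (a + u)) by (fold N; lra).
  assert (E2 : INR (S n) * (a - u) = PI - 2 * u) by (rewrite S_INR; fold N; lra).
  unfold Psi, coefL; rewrite E1, E2, !sin_PI_x, S_INR; fold N.
  assert (Sphi : 0 < sin (a - u)) by (apply sin_gt_0; lra).
  assert (Sau : 0 < sin (a + u)) by (apply sin_gt_0; lra).
  assert (S2u : 0 < sin (2 * u)) by (apply sin_gt_0; lra).
  assert (Su : 0 < sin u) by (apply sin_gt_0; lra).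
  assert (Cu : cos u <= 1) by (destruct (COS_bound u); lra).
  rewrite !Rabs_pos_eq by (apply Rlt_le, Rdiv_lt_0_compat; nra).
  apply Rminus_gt; rewrite sin_shift_identity by lra.
  apply Rdiv_lt_0_compat; [apply Rmult_lt_0_compat|]; nra.
Qed.

Lemma Psi_theta (n : nat) : (0 < n)%nat -> Psi n (theta n) = 1 / INR n.
Proof.
  intros hn.
  assert (N0 : 0 < INR n) by (apply lt_0_INR; lia).
  assert (Hth : INR (S n) * theta n = PI)
    by (unfold theta; field; apply not_0_INR; lia).
  rewrite S_INR in Hth.
  pose proof PI_RGT_0.
  assert (th0 : 0 < theta n) by nra.
  assert (Sth : 0 < sin (theta n)) by (apply sin_gt_0; nra).
  unfold Psi, coefL.
  replace (INR (S n) * theta n) with PI by (rewrite S_INR; lra).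
  replace (INR n * theta n) with (PI - theta n) by lra.
  rewrite sin_PI, sin_PI_x, Rdiv_0_l, Rabs_R0, Rminus_0_r.
  rewrite Rabs_pos_eq by (apply Rlt_le, Rdiv_lt_0_compat; nra).
  field; lra.
Qed.

Lemma Psi_theta_sub_gt (n : nat) (delta : R) :
  (4 <= n)%nat -> 0 < delta < / (100 * INR (S n) ^ 2) ->
  Psi n (theta n - delta) > 1 / INR n.
Proof.
  intros hn [d0 d1].
  assert (HN1 : 5 <= INR (S n))
    by (replace 5 with (INR 5) by (simpl; lra); apply le_INR; lia).
  set (N1 := INR (S n)) in *.
  pose proof PI2_3_2; pose proof PI_lt_3156.
  assert (Hd : N1 * N1 * delta < / 100).
  { apply (Rmult_lt_compat_l (100 * N1 ^ 2)) in d1; [|nra].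
    rewrite Rinv_r in d1 by nra; nra. }
  assert (Hth : N1 * theta n = PI) by (unfold theta; fold N1; field; lra).
  assert (Hn : INR n = N1 - 1) by (unfold N1; rewrite S_INR; ring).
  set (a := theta n + (N1 - 2) * delta / 2).
  set (u := N1 * delta / 2).
  assert (HaN1 : N1 * a = PI + N1 * (N1 - 2) * delta / 2)
    by (unfold a; rewrite Rmult_plus_distr_l, Hth; field).
  assert (Hgrowth : 0 <= N1 * (N1 - 2) * delta / 2 < / 200).
  { assert (0 <= N1 * delta) by nra. split; nra. }
  assert (Hu : 0 < N1 * u < / 200) by (unfold u; split; nra).
  replace (theta n - delta) with (a - u) by (unfold a, u; field).
  apply Psi_gt_inv_of_cos; fold N1; rewrite ?Hn.
  - lia.
  - unfold u; rewrite HaN1; field.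
  - split; apply (Rmult_lt_reg_l N1); rewrite ?Rmult_0_r; lra.
  - apply (Rmult_lt_reg_l N1); [lra|].
    rewrite Rmult_plus_distr_l; nra.
  - (* [(n+1) a^2 < 2] because [((n+1) a)^2 < 10 <= 2 (n+1)]. *)
    assert (Hsq : N1 * a * a < 2) by nra.
    pose proof (cos_ge_1_sub_sqr_div2 a ltac:(nra)).
    nra.
Qed.

Theorem mainTheorem3 (n : nat) (hn : (4 <= n)%nat) :
  (exists phi : R, Psi n phi > 1 / INR n) /\
  Psi n (theta n) = 1 / INR n /\
  (exists eps : R, eps > 0 /\
     forall delta : R, 0 < delta < eps -> Psi n (theta n - delta) > 1 / INR n).
Proof.
  set (eps := / (100 * INR (S n) ^ 2)).
  assert (eps0 : eps > 0)
    by (apply Rinv_0_lt_compat, Rmult_lt_0_compat; [lra | apply pow_lt, lt_0_INR; lia]).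
  split; [|split].
  - exists (theta n - eps / 2); apply Psi_theta_sub_gt; [exact hn | fold eps; lra].
  - apply Psi_theta; lia.
  - exists eps; split; [exact eps0|]; intros delta Hdelta.
    exact (Psi_theta_sub_gt n delta hn Hdelta).
Qed.
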